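(* Let $(u,\phi)$ be a smooth solution of the periodic problem (PF-NS). Then for all $t>0$, $$\frac{d}{dt}\Big(\frac12\|u(t)\|^2+E(\phi(t))\Big)+\mu\|\nabla u\|^2+\gamma\Big\|\frac{\delta E}{\delta\phi}\Big\|^2=0.$$
   Context: Setting. $Q$ is the unit cube in $\mathbb R^3$ and all functions are $Q$-periodic; $\|\cdot\|$ is the $L^2(Q)$ norm. Fixed positive constants: $k,\varepsilon,\gamma,\mu,M_1,M_2$. For a scalar $\phi$: $f(\phi)=-\varepsilon\Delta\phi+\frac1\varepsilon(\phi^2-1)\phi$, $g(\phi)=-\Delta f(\phi)+\frac1{\varepsilon^2}(3\phi^2-1)f(\phi)$, $A(\phi)=\int_Q\phi$, $B(\phi)=\int_Q(\frac\varepsilon2|\nabla\phi|^2+\frac1{4\varepsilon}(\phi^2-1)^2)$, $E(\phi)=\frac{k}{2\varepsilon}\int_Q|f(\phi)|^2+\frac12M_1(A(\phi)-\alpha)^2+\frac12M_2(B(\phi)-\beta)^2$ with $\alpha=A(\phi_0)$, $\beta=B(\phi_0)$, and $\frac{\delta E}{\delta\phi}=kg(\phi)+M_1(A(\phi)-\alpha)+M_2(B(\phi)-\beta)f(\phi)$. Problem (PF-NS): $u_t+u\cdot\nabla u+\nabla P=\mu\Delta u+\frac{\delta E}{\delta\phi}\nabla\phi$, $\nabla\cdot u=0$, $\phi_t+u\cdot\nabla\phi=-\gamma\frac{\delta E}{\delta\phi}$, periodic in $x$, $u(0)=u_0$ (divergence free, zero mean), $\phi(0)=\phi_0$. *)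

From Stdlib Require Import Reals List.
From Coquelicot Require Import Coquelicot.
Open Scope R_scope.

Definition Pt : Type := (R * R * R)%type.

Definition coord (i : nat) (x : Pt) : R :=
  let '(a, b, c) := x in
  match i with 0%nat => a | 1%nat => b | _ => c end.

Definition upd (i : nat) (x : Pt) (s : R) : Pt :=
  let '(a, b, c) := x in
  match i with 0%nat => (s, b, c) | 1%nat => (a, s, c) | _ => (a, b, s) end.

Definition shift1 (i : nat) (x : Pt) : Pt := upd i x (coord i x + 1).

Definition sfield := Pt -> R.
Definition tfield := R -> Pt -> R.

Definition pd (i : nat) (g : sfield) : sfield :=
  fun x => Derive (fun s => g (upd i x s)) (coord i x).

Definition sum3 (F : nat -> R) : R := F 0%nat + F 1%nat + F 2%nat.

Definition lap (g : sfield) : sfield := fun x => sum3 (fun i => pd i (pd i g) x).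

Definition gradsq (g : sfield) : sfield := fun x => sum3 (fun i => (pd i g x)^2).

Definition intQ (g : sfield) : R :=
  RInt (fun a => RInt (fun b => RInt (fun c => g (a, b, c)) 0 1) 0 1) 0 1.

Definition nsq (g : sfield) : R := intQ (fun x => (g x)^2).

Definition dt (F : tfield) : tfield := fun t x => Derive (fun s => F s x) t.

(* Generic directional derivative: direction 0 = time, 1,2,3 = space x_1,x_2,x_3 *)
Definition Dir (d : nat) (F : tfield) : tfield :=
  match d with
  | 0%nat => dt F
  | S i => fun t => pd i (F t)
  end.

Definition iterD (l : list nat) (F : tfield) : tfield := fold_right Dir F l.

(* F is C^infinity on the open set {(t,x) : t > 0}: every iterated partial
   derivative exists and is jointly continuous there. *)
Definition smooth_pos (F : tfield) : Prop :=
  forall (l : list nat) (t : R) (x : Pt), 0 < t ->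
    ex_derive (fun s => iterD l F s x) t /\
    (forall i, (i < 3)%nat -> ex_derive (fun s => iterD l F t (upd i x s)) (coord i x)) /\
    continuous (fun p : R * Pt => iterD l F (fst p) (snd p)) (t, x).

Definition periodic (g : sfield) : Prop :=
  forall i x, (i < 3)%nat -> g (shift1 i x) = g x.

Section Energy.
Variables (k eps M1 M2 alpha beta : R).

Definition fphi (phi : sfield) : sfield :=
  fun x => - eps * lap phi x + / eps * ((phi x)^2 - 1) * phi x.

Definition gphi (phi : sfield) : sfield :=
  fun x => - lap (fphi phi) x + / (eps^2) * (3 * (phi x)^2 - 1) * fphi phi x.

Definition Aphi (phi : sfield) : R := intQ phi.

Definition Bphi (phi : sfield) : R :=
  intQ (fun x => eps / 2 * gradsq phi x + / (4 * eps) * ((phi x)^2 - 1)^2).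

Definition Ephi (phi : sfield) : R :=
  k / (2 * eps) * intQ (fun x => (fphi phi x)^2)
  + / 2 * M1 * (Aphi phi - alpha)^2 + / 2 * M2 * (Bphi phi - beta)^2.

Definition dEphi (phi : sfield) : sfield :=
  fun x => k * gphi phi x + M1 * (Aphi phi - alpha) + M2 * (Bphi phi - beta) * fphi phi x.
End Energy.

(* Differentiating under the iterated Riemann integrals gives
   d/dt (1/2 |u|^2 + E(phi)) = sum_i <u_i, d_t u_i> + <dE/dphi, d_t phi>: for E this uses that
   d_t commutes with the spatial derivatives in f(phi) and that the Laplacian is symmetric on
   periodic fields.  Substituting the equations, the convective and pressure terms integrate to
   zero by incompressibility, the viscous term gives -mu |grad u|^2, and the capillary force
   (dE/dphi) grad phi . u cancels the transport term of the phase equation, leaving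
   -gamma |dE/dphi|^2.  Every integration by parts is the fundamental theorem of calculus in one
   coordinate, whose boundary terms cancel by periodicity. *)

From Stdlib Require Import Reals List Lra Lia ClassicalEpsilon Classical FunctionalExtensionality.
From Coquelicot Require Import Coquelicot.
Open Scope R_scope.
Set Bullet Behavior "Strict Subproofs".

Lemma continuous_pair {U V W : UniformSpace} (f : U -> V) (g : U -> W) x :
  continuous f x -> continuous g x -> continuous (fun y => (f y, g y)) x.
Proof.
  intros Hf Hg. apply (continuous_comp_2 f g (fun a b => (a, b))); auto.
  eapply continuous_ext; [| apply continuous_id]. now intros [a b].
Qed.

Lemma continuous_fst_comp {U V W : UniformSpace} (f : U -> V * W) x :
  continuous f x -> continuous (fun y => fst (f y)) x.
Proof. intros Hf. apply (continuous_comp f fst); auto. destruct (f x). apply continuous_fst. Qed.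

Lemma continuous_snd_comp {U V W : UniformSpace} (f : U -> V * W) x :
  continuous f x -> continuous (fun y => snd (f y)) x.
Proof. intros Hf. apply (continuous_comp f snd); auto. destruct (f x). apply continuous_snd. Qed.

Ltac continuity_of_projections :=
  repeat first [ refine (continuous_pair _ _ _ _ _)
               | refine (continuous_fst_comp _ _ _) | refine (continuous_snd_comp _ _ _)
               | apply continuous_id | apply continuous_const ].

Lemma continuous_section {P : UniformSpace} (H : P -> R -> R) p c :
  continuous (fun q : P * R => H (fst q) (snd q)) (p, c) -> continuous (H p) c.
Proof.
  intros Hc. apply (continuous_comp_2 (fun _ => p) (fun y => y) H); auto.
  - apply continuous_const.
  - apply continuous_id.
Qed.

Lemma ex_RInt01_continuous (f : R -> R) :
  (forall c, 0 <= c <= 1 -> continuous f c) -> ex_RInt f 0 1.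
Proof.
  intros Hf. apply (ex_RInt_continuous (V := R_CompleteNormedModule)). intros z Hz.
  rewrite Rmin_left, Rmax_right in Hz by lra. auto.
Qed.

(* Heine-Cantor along the compact fibre [0, 1]. *)
Lemma joint_continuity_uniform {P : UniformSpace} (H : P -> R -> R) (p0 : P) :
  (forall c, 0 <= c <= 1 -> continuous (fun q : P * R => H (fst q) (snd q)) (p0, c)) ->
  forall e : posreal, exists d : posreal, forall p, ball p0 d p ->
    forall c, 0 <= c <= 1 -> Rabs (H p c - H p0 c) <= e.
Proof.
  intros Hc e.
  assert (He2 : 0 < e / 2) by (destruct e; simpl; lra).
  set (e2 := mkposreal _ He2).
  assert (Hd : forall c, exists d : posreal, 0 <= c <= 1 ->
     forall q : P * R, ball (p0, c) d q -> Rabs (H (fst q) (snd q) - H p0 c) < e2).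
  { intros c. destruct (Rle_dec 0 c); [destruct (Rle_dec c 1)|].
    - assert (Hcc := Hc c ltac:(lra)). unfold continuous in Hcc.
      rewrite filterlim_locally in Hcc. destruct (Hcc e2) as [d Hd'].
      exists d. intros _ q Hq. exact (Hd' q Hq).
    - exists (mkposreal 1 Rlt_0_1). intros []; lra.
    - exists (mkposreal 1 Rlt_0_1). intros []; lra. }
  set (delta c := proj1_sig (constructive_indefinite_description _ (Hd c))).
  assert (Hdelta : forall c, 0 <= c <= 1 -> forall q : P * R, ball (p0, c) (delta c) q ->
                     Rabs (H (fst q) (snd q) - H p0 c) < e2)
    by (intros c; exact (proj2_sig (constructive_indefinite_description _ (Hd c)))).
  destruct (compactness_value_1d 0 1 delta) as [d Hcomp].
  exists d. intros p Hp c Hc01.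
  apply NNPP. intro Hn. apply (Hcomp c Hc01). intros [w [Hw [Hcw Hdw]]]. apply Hn.
  assert (A1 : Rabs (H p c - H p0 w) < e2).
  { apply (Hdelta w Hw (p, c)). split; [eapply ball_le; eauto | exact Hcw]. }
  assert (A2 : Rabs (H p0 c - H p0 w) < e2).
  { apply (Hdelta w Hw (p0, c)). split; [apply ball_center | exact Hcw]. }
  simpl in A1, A2.
  replace (H p c - H p0 c) with ((H p c - H p0 w) - (H p0 c - H p0 w)) by ring.
  eapply Rle_trans; [apply Rabs_triang|]. rewrite Rabs_Ropp. lra.
Qed.

Lemma continuous_RInt01_param {P : UniformSpace} (H : P -> R -> R) (p0 : P) :
  locally p0 (fun p => forall c, 0 <= c <= 1 ->
     continuous (fun q : P * R => H (fst q) (snd q)) (p, c)) ->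
  continuous (fun p => RInt (H p) 0 1) p0.
Proof.
  intros Hloc.
  assert (Hint : forall p, (forall c, 0 <= c <= 1 ->
            continuous (fun q : P * R => H (fst q) (snd q)) (p, c)) -> ex_RInt (H p) 0 1).
  { intros p Hp. apply ex_RInt01_continuous. intros c Hc. now apply continuous_section, Hp. }
  assert (Hc0 := locally_singleton _ _ Hloc).
  apply filterlim_locally. intros e.
  assert (He2 : 0 < e / 2) by (destruct e; simpl; lra).
  destruct (joint_continuity_uniform H p0 Hc0 (mkposreal _ He2)) as [d Hd].
  destruct Hloc as [r Hr].
  assert (Hmin : 0 < Rmin d r) by (apply Rmin_pos; [destruct d | destruct r]; auto).
  exists (mkposreal _ Hmin). intros p Hp. simpl in Hp.
  assert (Hpd : ball p0 d p) by (eapply ball_le; [apply Rmin_l | exact Hp]).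
  assert (Hpr : ball p0 r p) by (eapply ball_le; [apply Rmin_r | exact Hp]).
  change (Rabs (RInt (H p) 0 1 - RInt (H p0) 0 1) < e).
  rewrite <- (RInt_minus (V := R_CompleteNormedModule)) by auto.
  eapply Rle_lt_trans.
  - apply abs_RInt_le_const with (M := e / 2); [lra | | exact (Hd p Hpd)].
    apply (ex_RInt_minus (V := R_CompleteNormedModule)); auto.
  - destruct e; simpl; lra.
Qed.

Lemma is_derive_RInt01_param (K dK : R -> R -> R) (D : R -> Prop) : open D ->
  (forall s c, D s -> is_derive (fun z => K z c) s (dK s c)) ->
  (forall s c, D s -> continuous (fun q : R * R => K (fst q) (snd q)) (s, c)) ->
  (forall s c, D s -> continuous (fun q : R * R => dK (fst q) (snd q)) (s, c)) ->
  forall s, D s -> is_derive (fun z => RInt (K z) 0 1) s (RInt (dK s) 0 1).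
Proof.
  intros Do Hd HK HdK s Ds.
  replace (RInt (dK s) 0 1) with (RInt (fun c => Derive (fun z => K z c) s) 0 1)
    by (apply RInt_ext; intros c _; apply is_derive_unique; auto).
  apply (is_derive_RInt_param (fun z c => K z c)).
  - apply (locally_open D); auto. intros z Dz c _. eexists; apply Hd; auto.
  - intros c _. apply continuity_2d_pt_filterlim.
    change (continuous (fun q : R * R => Derive (fun z => K z (snd q)) (fst q)) (s, c)).
    apply (continuous_ext_loc _ (fun q : R * R => dK (fst q) (snd q))); [| auto].
    apply (locally_open (fun q : R * R => D (fst q))).
    + apply (open_comp fst D); auto. intros [z w] _. apply continuous_fst.
    + intros [z w] Dz. symmetry. apply is_derive_unique. auto.
    + exact Ds.
  - apply (locally_open D); auto. intros z Dz.
    apply ex_RInt01_continuous. intros c _. apply continuous_section. auto.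
Qed.

Lemma locally_fst {U V : UniformSpace} (D : U -> Prop) (x : U) (y : V) :
  locally x D -> locally (x, y) (fun q => D (fst q)).
Proof. intros [e He]. exists e. intros [a b] [H1 _]. apply He. exact H1. Qed.

Definition jcont_on (G : tfield) (D : R -> Prop) : Prop :=
  forall s x, D s -> continuous (fun p : R * Pt => G (fst p) (snd p)) (s, x).

Definition int_c (G : tfield) (s a b : R) : R := RInt (fun c => G s (a, b, c)) 0 1.
Definition int_bc (G : tfield) (s a : R) : R := RInt (fun b => int_c G s a b) 0 1.

Section SliceIntegrals.
Variables (D : R -> Prop).
Hypothesis HD : open D.

Lemma continuous_int_c G s a b : jcont_on G D -> D s ->
  continuous (fun q : R * R * R => int_c G (fst (fst q)) (snd (fst q)) (snd q)) (s, a, b).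
Proof.
  intros HG Ds. apply (continuous_RInt01_param
    (fun (q : R * R * R) c => G (fst (fst q)) (snd (fst q), snd q, c))).
  apply (filter_imp (fun q : R * R * R => D (fst (fst q)))).
  - intros [[s' a'] b'] Ds' c _.
    apply (continuous_comp
      (fun w : R * R * R * R => (fst (fst (fst w)), (snd (fst (fst w)), snd (fst w), snd w)))
      (fun p : R * Pt => G (fst p) (snd p))); [continuity_of_projections | apply HG; auto].
  - apply (locally_fst (fun q : R * R => D (fst q))), locally_fst, (locally_open D); auto.
Qed.

Lemma continuous_int_bc G s a : jcont_on G D -> D s ->
  continuous (fun q : R * R => int_bc G (fst q) (snd q)) (s, a).
Proof.
  intros HG Ds. apply (continuous_RInt01_param (fun (q : R * R) b => int_c G (fst q) (snd q) b)).
  apply (filter_imp (fun q : R * R => D (fst q))).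
  - intros [s' a'] Ds' c _. apply continuous_int_c; auto.
  - apply locally_fst, (locally_open D); auto.
Qed.

Section Derivatives.
Variable G : tfield.
Hypothesis HG : jcont_on G D.
Hypothesis HdG : jcont_on (dt G) D.
Hypothesis Hex : forall s x, D s -> ex_derive (fun z => G z x) s.

Lemma is_derive_int_c s a b : D s -> is_derive (fun z => int_c G z a b) s (int_c (dt G) s a b).
Proof.
  apply (is_derive_RInt01_param (fun z c => G z (a, b, c)) (fun z c => dt G z (a, b, c)) D HD).
  - intros s' c Ds'. apply Derive_correct, Hex, Ds'.
  - intros s' c Ds'. apply (continuous_comp (fun w : R * R => (fst w, (a, b, snd w)))
      (fun p : R * Pt => G (fst p) (snd p))); [continuity_of_projections | apply HG; auto].
  - intros s' c Ds'. apply (continuous_comp (fun w : R * R => (fst w, (a, b, snd w)))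
      (fun p : R * Pt => dt G (fst p) (snd p))); [continuity_of_projections | apply HdG; auto].
Qed.

Lemma is_derive_int_bc s a : D s -> is_derive (fun z => int_bc G z a) s (int_bc (dt G) s a).
Proof.
  apply (is_derive_RInt01_param (fun z b => int_c G z a b) (fun z b => int_c (dt G) z a b) D HD).
  - intros s' b Ds'. apply is_derive_int_c, Ds'.
  - intros s' b Ds'. apply (continuous_comp (fun w : R * R => (fst w, a, snd w))
      (fun q : R * R * R => int_c G (fst (fst q)) (snd (fst q)) (snd q)));
      [continuity_of_projections | apply continuous_int_c; auto].
  - intros s' b Ds'. apply (continuous_comp (fun w : R * R => (fst w, a, snd w))
      (fun q : R * R * R => int_c (dt G) (fst (fst q)) (snd (fst q)) (snd q)));
      [continuity_of_projections | apply continuous_int_c; auto].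
Qed.

Lemma is_derive_intQ s : D s -> is_derive (fun z => intQ (G z)) s (intQ (dt G s)).
Proof.
  apply (is_derive_RInt01_param (int_bc G) (int_bc (dt G)) D HD).
  - exact is_derive_int_bc.
  - intros s' a Ds'. apply continuous_int_bc; auto.
  - intros s' a Ds'. apply continuous_int_bc; auto.
Qed.

End Derivatives.
End SliceIntegrals.

Definition scont (g : sfield) : Prop := forall x, continuous g x.

Lemma jcont_on_const_time (g : sfield) : scont g -> jcont_on (fun _ => g) (fun _ => True).
Proof. intros Hg s x _. apply (continuous_comp snd g); [apply continuous_snd | apply Hg]. Qed.

Lemma ex_RInt_c (g : sfield) a b : scont g -> ex_RInt (fun c => g (a, b, c)) 0 1.
Proof.
  intros Hg. apply ex_RInt01_continuous. intros c _.
  apply (continuous_comp (fun c => (a, b, c)) g); [continuity_of_projections | apply Hg].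
Qed.

Lemma ex_RInt_bc (g : sfield) a : scont g -> ex_RInt (fun b => int_c (fun _ => g) 0 a b) 0 1.
Proof.
  intros Hg. apply ex_RInt01_continuous. intros b _.
  apply (continuous_comp (fun b => (0, a, b))
    (fun q : R * R * R => int_c (fun _ => g) (fst (fst q)) (snd (fst q)) (snd q)));
    [continuity_of_projections | apply (continuous_int_c _ open_true); [|exact I]].
  now apply jcont_on_const_time.
Qed.

Lemma ex_RInt_abc (g : sfield) : scont g -> ex_RInt (fun a => int_bc (fun _ => g) 0 a) 0 1.
Proof.
  intros Hg. apply ex_RInt01_continuous. intros a _.
  apply (continuous_comp (fun a => (0, a)) (fun q : R * R => int_bc (fun _ => g) (fst q) (snd q)));
    [continuity_of_projections | apply (continuous_int_bc _ open_true); [|exact I]].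
  now apply jcont_on_const_time.
Qed.

Lemma intQ_ext (f g : sfield) : (forall x, f x = g x) -> intQ f = intQ g.
Proof. intros H. f_equal. apply functional_extensionality, H. Qed.

Lemma intQ_plus (f g : sfield) : scont f -> scont g ->
  intQ (fun x => f x + g x) = intQ f + intQ g.
Proof.
  intros Hf Hg. unfold intQ.
  rewrite <- (RInt_plus (V := R_CompleteNormedModule)) by (apply ex_RInt_abc; auto).
  apply RInt_ext. intros a _.
  rewrite <- (RInt_plus (V := R_CompleteNormedModule)) by (apply ex_RInt_bc; auto).
  apply RInt_ext. intros b _.
  rewrite <- (RInt_plus (V := R_CompleteNormedModule)) by (apply ex_RInt_c; auto).
  reflexivity.
Qed.

Lemma intQ_scal (f : sfield) c : scont f -> intQ (fun x => c * f x) = c * intQ f.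
Proof.
  intros Hf. unfold intQ.
  rewrite <- (RInt_scal (V := R_CompleteNormedModule)) by (apply ex_RInt_abc; auto).
  apply RInt_ext. intros a _.
  rewrite <- (RInt_scal (V := R_CompleteNormedModule)) by (apply ex_RInt_bc; auto).
  apply RInt_ext. intros b _.
  rewrite <- (RInt_scal (V := R_CompleteNormedModule)) by (apply ex_RInt_c; auto).
  reflexivity.
Qed.

Lemma intQ_zero : intQ (fun _ => 0) = 0.
Proof.
  rewrite (intQ_ext _ (fun _ => 0 * 0)) by (intros; ring).
  rewrite intQ_scal by (intros x; apply continuous_const). ring.
Qed.

Lemma scont_plus (f g : sfield) : scont f -> scont g -> scont (fun x => f x + g x).
Proof. intros Hf Hg x. apply (continuous_plus f g); auto. Qed.

Lemma scont_mult (f g : sfield) : scont f -> scont g -> scont (fun x => f x * g x).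
Proof. intros Hf Hg x. apply (continuous_mult f g); auto. Qed.

Lemma upd_upd i x s z : upd i (upd i x s) z = upd i x z.
Proof. destruct x as [[a b] c]; destruct i as [|[|i]]; reflexivity. Qed.

Lemma coord_upd i x s : coord i (upd i x s) = s.
Proof. destruct x as [[a b] c]; destruct i as [|[|i]]; reflexivity. Qed.

Lemma upd_coord i x : upd i x (coord i x) = x.
Proof. destruct x as [[a b] c]; destruct i as [|[|i]]; reflexivity. Qed.

Lemma continuous_upd i (p : R * Pt) : continuous (fun p : R * Pt => upd i (snd p) (fst p)) p.
Proof.
  destruct p as [s [[a b] c]]; destruct i as [|[|i]].
  - apply (continuous_ext (fun p : R * Pt => (fst p, snd (fst (snd p)), snd (snd p)))).
    { now intros [s' [[a' b'] c']]. } continuity_of_projections.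
  - apply (continuous_ext (fun p : R * Pt => (fst (fst (snd p)), fst p, snd (snd p)))).
    { now intros [s' [[a' b'] c']]. } continuity_of_projections.
  - apply (continuous_ext (fun p : R * Pt => (fst (fst (snd p)), snd (fst (snd p)), fst p))).
    { now intros [s' [[a' b'] c']]. } continuity_of_projections.
Qed.

Lemma periodic_upd (v : sfield) i x : (i < 3)%nat -> periodic v -> v (upd i x 1) = v (upd i x 0).
Proof.
  intros Hi Hv. rewrite <- (Hv i (upd i x 0) Hi). unfold shift1.
  rewrite coord_upd, upd_upd, Rplus_0_l. reflexivity.
Qed.

Definition ex_pd (i : nat) (v : sfield) : Prop :=
  forall y, ex_derive (fun z => v (upd i y z)) (coord i y).

(* The i-th coordinate of [v] made into the time variable, so that the
   parametric results above apply to spatial derivatives. *)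
Definition along (v : sfield) (i : nat) : tfield := fun s x => v (upd i x s).

Lemma dt_along v i s x : dt (along v i) s x = pd i v (upd i x s).
Proof.
  unfold dt, along, pd. rewrite coord_upd. apply Derive_ext. intros z. now rewrite upd_upd.
Qed.

Lemma jcont_on_along v i : scont v -> jcont_on (along v i) (fun _ => True).
Proof.
  intros Hv s x _. apply (continuous_comp (fun p : R * Pt => upd i (snd p) (fst p)) v);
    [apply continuous_upd | apply Hv].
Qed.

Lemma jcont_on_dt_along v i : scont (pd i v) -> jcont_on (dt (along v i)) (fun _ => True).
Proof.
  intros Hv s x _. apply (continuous_ext (fun p : R * Pt => pd i v (upd i (snd p) (fst p)))).
  - intros p. symmetry. apply dt_along.
  - apply (continuous_comp (fun p : R * Pt => upd i (snd p) (fst p)) (pd i v));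
      [apply continuous_upd | apply Hv].
Qed.

Lemma ex_derive_along v i : ex_pd i v -> forall s x, True -> ex_derive (fun z => along v i z x) s.
Proof.
  intros H s x _. specialize (H (upd i x s)). rewrite coord_upd in H.
  eapply ex_derive_ext; [| exact H]. intros z. simpl. now rewrite upd_upd.
Qed.

Lemma RInt_derive_periodic01 (f df : R -> R) :
  (forall x, is_derive f x (df x)) -> (forall x, continuous df x) ->
  f 1 = f 0 -> RInt df 0 1 = 0.
Proof.
  intros Hd Hc Hper. rewrite (is_RInt_unique df 0 1 (f 1 - f 0)).
  - rewrite Hper. apply Rminus_diag_eq. reflexivity.
  - apply (is_RInt_derive f df); auto.
Qed.

Lemma RInt01_zero (f : R -> R) : (forall x, f x = 0) -> RInt f 0 1 = 0.
Proof.
  intros Hf. rewrite (RInt_ext _ (fun _ => 0)) by auto.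
  rewrite RInt_const. apply (scal_zero_r (K := R_Ring) (V := R_ModuleSpace)).
Qed.

(* FTC in the variable x_i, which is the outer, middle or inner variable of [intQ]. *)
Lemma intQ_pd_periodic (v : sfield) i : (i < 3)%nat -> scont v -> scont (pd i v) ->
  ex_pd i v -> periodic v -> intQ (pd i v) = 0.
Proof.
  intros Hi Hv Hpv Hex Hper.
  assert (HJ := jcont_on_along v i Hv). assert (HJd := jcont_on_dt_along v i Hpv).
  assert (He := ex_derive_along v i Hex).
  destruct i as [|[|[|i]]]; [| | | lia]; unfold intQ.
  - transitivity (RInt (fun a => int_bc (dt (along v 0)) a 0) 0 1).
    { apply RInt_ext. intros a _. apply RInt_ext. intros b _. apply RInt_ext. intros c _.
      now rewrite dt_along. }
    apply (RInt_derive_periodic01 (fun z => int_bc (along v 0) z 0)).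
    + intros a. apply (is_derive_int_bc _ open_true); auto.
    + intros a. apply (continuous_comp (fun z => (z, 0))
        (fun q : R * R => int_bc (dt (along v 0)) (fst q) (snd q)));
        [continuity_of_projections | apply (continuous_int_bc _ open_true); auto].
    + unfold int_bc, int_c, along.
      apply RInt_ext. intros b _. apply RInt_ext. intros c _. now apply periodic_upd.
  - apply RInt01_zero. intros a.
    transitivity (RInt (fun b => int_c (dt (along v 1)) b a 0) 0 1).
    { apply RInt_ext. intros b _. apply RInt_ext. intros c _. now rewrite dt_along. }
    apply (RInt_derive_periodic01 (fun z => int_c (along v 1) z a 0)).
    + intros b. apply (is_derive_int_c _ open_true); auto.
    + intros b. apply (continuous_comp (fun z => (z, a, 0))
        (fun q : R * R * R => int_c (dt (along v 1)) (fst (fst q)) (snd (fst q)) (snd q)));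
        [continuity_of_projections | apply (continuous_int_c _ open_true); auto].
    + unfold int_c, along. apply RInt_ext. intros c _. now apply periodic_upd.
  - apply RInt01_zero. intros a. apply RInt01_zero. intros b.
    apply (RInt_derive_periodic01 (fun z => v (a, b, z))).
    + intros c. apply Derive_correct, (Hex (a, b, c)).
    + intros c. apply (continuous_comp (fun z => (a, b, z)) (pd 2 v));
        [continuity_of_projections | apply Hpv].
    + exact (periodic_upd v 2 (a, b, 0) ltac:(lia) Hper).
Qed.

Lemma pd_mult i (h w : sfield) x : ex_pd i h -> ex_pd i w ->
  pd i (fun y => h y * w y) x = pd i h x * w x + h x * pd i w x.
Proof.
  intros Hh Hw. unfold pd.
  rewrite (Derive_mult (fun s => h (upd i x s)) (fun s => w (upd i x s))) by auto.
  rewrite upd_coord. ring.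
Qed.

Lemma ex_pd_mult i (h w : sfield) : ex_pd i h -> ex_pd i w -> ex_pd i (fun y => h y * w y).
Proof.
  intros Hh Hw y. apply (ex_derive_mult (fun s => h (upd i y s)) (fun s => w (upd i y s))); auto.
Qed.

Lemma intQ_by_parts i (h w : sfield) : (i < 3)%nat ->
  scont h -> scont w -> scont (pd i h) -> scont (pd i w) ->
  ex_pd i h -> ex_pd i w -> periodic h -> periodic w ->
  intQ (fun x => h x * pd i w x) = - intQ (fun x => pd i h x * w x).
Proof.
  intros Hi Hh Hw Hph Hpw Eh Ew Ph Pw.
  assert (E : forall x, pd i (fun y => h y * w y) x = pd i h x * w x + h x * pd i w x)
    by (intros; apply pd_mult; auto).
  assert (Z : intQ (pd i (fun y => h y * w y)) = 0).
  { apply intQ_pd_periodic; auto using scont_mult, ex_pd_mult.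
    - intros x. rewrite (functional_extensionality _ _ E).
      apply scont_plus; apply scont_mult; auto.
    - intros j x Hj. now rewrite (Ph j x Hj), (Pw j x Hj). }
  rewrite (intQ_ext _ _ E), intQ_plus in Z by (apply scont_mult; auto).
  lra.
Qed.

Definition regular (F : tfield) : Prop := smooth_pos F /\ forall t, 0 < t -> periodic (F t).

(* Polynomials in the derivatives of regular fields.  [pdiff d] differentiates formally in
   direction [d] (0 = time, [S i] = x_i) by the product rule, and [peval_regular] shows that it
   computes the true derivative for t > 0; this discharges every regularity side condition of
   the integral calculus below. *)
Inductive pexpr : Type :=
| PDer (F : tfield) (l : list nat)
| PConst (r : R)
| PAdd (e1 e2 : pexpr)
| PMul (e1 e2 : pexpr).

Infix "<+>" := PAdd (at level 50, left associativity).
Infix "<*>" := PMul (at level 40, left associativity).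

Definition PField (F : tfield) : pexpr := PDer F nil.
Definition psum3 (f : nat -> pexpr) : pexpr := f 0%nat <+> f 1%nat <+> f 2%nat.

Fixpoint peval (e : pexpr) : tfield :=
  match e with
  | PDer F l => iterD l F
  | PConst r => fun _ _ => r
  | e1 <+> e2 => fun t x => peval e1 t x + peval e2 t x
  | e1 <*> e2 => fun t x => peval e1 t x * peval e2 t x
  end.

Fixpoint pdiff (d : nat) (e : pexpr) : pexpr :=
  match e with
  | PDer F l => PDer F (d :: l)
  | PConst _ => PConst 0
  | e1 <+> e2 => pdiff d e1 <+> pdiff d e2
  | e1 <*> e2 => pdiff d e1 <*> e2 <+> e1 <*> pdiff d e2
  end.

Fixpoint admissible (e : pexpr) : Prop :=
  match e with
  | PDer F _ => regular F
  | PConst _ => True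
  | e1 <+> e2 | e1 <*> e2 => admissible e1 /\ admissible e2
  end.

Lemma admissible_pdiff d e : admissible e -> admissible (pdiff d e).
Proof. induction e; simpl; tauto. Qed.

Definition dir_line (d : nat) (F : tfield) (t : R) (x : Pt) : R -> R :=
  match d with 0%nat => fun s => F s x | S i => fun s => F t (upd i x s) end.

Definition dir_base (d : nat) (t : R) (x : Pt) : R :=
  match d with 0%nat => t | S i => coord i x end.

Lemma Dir_line d F t x : Dir d F t x = Derive (dir_line d F t x) (dir_base d t x).
Proof. now destruct d. Qed.

Lemma dir_line_base d F t x : dir_line d F t x (dir_base d t x) = F t x.
Proof. destruct d; simpl; [| rewrite upd_coord]; reflexivity. Qed.

Lemma peval_regular e : admissible e -> forall t x, 0 < t ->
  continuous (fun p : R * Pt => peval e (fst p) (snd p)) (t, x) /\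
  forall d, (d < 4)%nat -> ex_derive (dir_line d (peval e) t x) (dir_base d t x) /\
     Dir d (peval e) t x = peval (pdiff d e) t x.
Proof.
  induction e as [F l|r|e1 IH1 e2 IH2|e1 IH1 e2 IH2]; intros He t x Ht.
  - destruct He as [HF _]. destruct (HF l t x Ht) as [H1 [H2 H3]].
    split; [exact H3|]. intros [|i] Hd; (split; [simpl | reflexivity]); [exact H1 | apply H2; lia].
  - split; [apply continuous_const|]. intros d _.
    rewrite Dir_line. destruct d; simpl; split; first [apply ex_derive_const | apply Derive_const].
  - destruct He as [He1 He2].
    destruct (IH1 He1 t x Ht) as [C1 D1], (IH2 He2 t x Ht) as [C2 D2].
    split; [apply (continuous_plus (fun p : R * Pt => peval e1 (fst p) (snd p))); auto|].
    intros d Hd. destruct (D1 d Hd) as [E1 F1], (D2 d Hd) as [E2 F2].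
    assert (Hl : dir_line d (peval (e1 <+> e2)) t x
                 = fun s => dir_line d (peval e1) t x s + dir_line d (peval e2) t x s)
      by now destruct d.
    rewrite Dir_line, Hl. split; [apply (ex_derive_plus _ _ _ E1 E2)|].
    rewrite Derive_plus, <- !Dir_line, F1, F2 by auto. reflexivity.
  - destruct He as [He1 He2].
    destruct (IH1 He1 t x Ht) as [C1 D1], (IH2 He2 t x Ht) as [C2 D2].
    split; [apply (continuous_mult (fun p : R * Pt => peval e1 (fst p) (snd p))); auto|].
    intros d Hd. destruct (D1 d Hd) as [E1 F1], (D2 d Hd) as [E2 F2].
    assert (Hl : dir_line d (peval (e1 <*> e2)) t x
                 = fun s => dir_line d (peval e1) t x s * dir_line d (peval e2) t x s)
      by now destruct d.
    rewrite Dir_line, Hl. split; [apply (ex_derive_mult _ _ _ E1 E2)|].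
    rewrite Derive_mult, <- !Dir_line, F1, F2, !dir_line_base by auto. reflexivity.
Qed.

Lemma locally_pos t : 0 < t -> locally t (fun s => 0 < s).
Proof.
  intros Ht. exists (mkposreal t Ht). intros y Hy. change (Rabs (y - t) < t) in Hy.
  apply Rabs_def2 in Hy. lra.
Qed.

Lemma Derive_periodic (f : R -> R) a : (forall s, f (s + 1) = f s) -> Derive f (a + 1) = Derive f a.
Proof.
  intros Hf. unfold Derive. f_equal. apply Lim_ext. intros h.
  replace (a + 1 + h) with ((a + h) + 1) by ring. now rewrite !Hf.
Qed.

Lemma periodic_pd g i : periodic g -> periodic (pd i g).
Proof.
  intros Hg j x Hj. destruct x as [[a b] c].
  pose proof (fun s => Hg j (s, b, c) Hj) as H1.
  pose proof (fun s => Hg j (a, s, c) Hj) as H2.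
  pose proof (fun s => Hg j (a, b, s) Hj) as H3.
  destruct j as [|[|[|j]]]; try lia; destruct i as [|[|i]]; unfold pd, shift1 in *; simpl in *;
    (apply Derive_periodic || apply Derive_ext); auto.
Qed.

Lemma periodic_iterD F l : regular F -> forall t, 0 < t -> periodic (iterD l F t).
Proof.
  intros [_ HF]. induction l as [|[|i] l IH]; intros t Ht; simpl; auto using periodic_pd.
  intros j x Hj. unfold dt. apply Derive_ext_loc.
  apply (filter_imp (fun s => 0 < s)); [| now apply locally_pos].
  intros s Hs. now apply IH.
Qed.

Lemma periodic_peval e t : admissible e -> 0 < t -> periodic (peval e t).
Proof.
  induction e as [F l|r|e1 IH1 e2 IH2|e1 IH1 e2 IH2]; intros He Ht j x Hj; simpl in *.
  - now apply periodic_iterD.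
  - reflexivity.
  - destruct He. now rewrite IH1, IH2.
  - destruct He. now rewrite IH1, IH2.
Qed.

Lemma scont_peval e t : admissible e -> 0 < t -> scont (peval e t).
Proof.
  intros He Ht x. destruct (peval_regular e He t x Ht) as [C _].
  apply (continuous_comp (fun y : Pt => (t, y)) (fun p : R * Pt => peval e (fst p) (snd p)));
    [continuity_of_projections | exact C].
Qed.

Lemma ex_pd_peval e t i : admissible e -> 0 < t -> (i < 3)%nat -> ex_pd i (peval e t).
Proof.
  intros He Ht Hi y. destruct (peval_regular e He t y Ht) as [_ D].
  apply (D (S i)). lia.
Qed.

Lemma pd_peval e t i : admissible e -> 0 < t -> (i < 3)%nat ->
  pd i (peval e t) = peval (pdiff (S i) e) t.
Proof.
  intros He Ht Hi. apply functional_extensionality. intros y.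
  destruct (peval_regular e He t y Ht) as [_ D]. apply (D (S i)). lia.
Qed.

Lemma dt_peval e t x : admissible e -> 0 < t -> dt (peval e) t x = peval (pdiff 0 e) t x.
Proof. intros He Ht. destruct (peval_regular e He t x Ht) as [_ D]. apply (D 0%nat). lia. Qed.

Lemma intQ_peval_add e1 e2 t : admissible e1 -> admissible e2 -> 0 < t ->
  intQ (peval (e1 <+> e2) t) = intQ (peval e1 t) + intQ (peval e2 t).
Proof.
  intros.
  change (intQ (fun x => peval e1 t x + peval e2 t x) = intQ (peval e1 t) + intQ (peval e2 t)).
  apply intQ_plus; now apply scont_peval.
Qed.

Lemma intQ_peval_scal c e t : admissible e -> 0 < t ->
  intQ (peval (PConst c <*> e) t) = c * intQ (peval e t).
Proof.
  intros. change (intQ (fun x => c * peval e t x) = c * intQ (peval e t)).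
  apply intQ_scal. now apply scont_peval.
Qed.

Lemma intQ_peval_psum3 f t : (forall i, (i < 3)%nat -> admissible (f i)) -> 0 < t ->
  intQ (peval (psum3 f) t) = sum3 (fun i => intQ (peval (f i) t)).
Proof.
  intros Hf Ht. unfold psum3, sum3.
  rewrite !intQ_peval_add; auto; try (apply Hf; lia). split; apply Hf; lia.
Qed.

Lemma sum3_ext (a b : nat -> R) : (forall i, (i < 3)%nat -> a i = b i) -> sum3 a = sum3 b.
Proof. intros H. unfold sum3. rewrite !H by lia. reflexivity. Qed.

Lemma intQ_peval_psum3_psum3 f t :
  (forall i j, (i < 3)%nat -> (j < 3)%nat -> admissible (f i j)) -> 0 < t ->
  intQ (peval (psum3 (fun i => psum3 (fun j => f i j))) t)
  = sum3 (fun i => sum3 (fun j => intQ (peval (f i j) t))).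
Proof.
  intros Hf Ht. rewrite intQ_peval_psum3; auto.
  - apply sum3_ext. intros i Hi. apply intQ_peval_psum3; auto.
  - intros i Hi. unfold psum3. repeat split; apply Hf; lia.
Qed.

Lemma intQ_peval_by_parts h w t i : admissible h -> admissible w -> 0 < t -> (i < 3)%nat ->
  intQ (peval (h <*> pdiff (S i) w) t) = - intQ (peval (pdiff (S i) h <*> w) t).
Proof.
  intros Hh Hw Ht Hi. simpl. rewrite <- (pd_peval w), <- (pd_peval h) by auto.
  apply intQ_by_parts; auto using scont_peval, ex_pd_peval, periodic_peval;
    rewrite pd_peval; auto using scont_peval, admissible_pdiff.
Qed.

Lemma intQ_peval_by_parts2 h w t i : admissible h -> admissible w -> 0 < t -> (i < 3)%nat ->
  intQ (peval (h <*> pdiff (S i) (pdiff (S i) w)) t)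
  = intQ (peval (pdiff (S i) (pdiff (S i) h) <*> w) t).
Proof.
  intros Hh Hw Ht Hi.
  rewrite intQ_peval_by_parts, (intQ_peval_by_parts (pdiff (S i) h) w); auto using admissible_pdiff.
  ring.
Qed.

Lemma is_derive_intQ_peval e t : admissible e -> 0 < t ->
  is_derive (fun s => intQ (peval e s)) t (intQ (peval (pdiff 0 e) t)).
Proof.
  intros He Ht.
  rewrite <- (intQ_ext (dt (peval e) t)) by (intros; now apply dt_peval).
  apply (is_derive_intQ (fun s => 0 < s)); auto.
  - intros s Hs. now apply locally_pos.
  - intros s x Hs. apply (peval_regular e He s x Hs).
  - intros s x Hs.
    apply (continuous_ext_loc _ (fun p : R * Pt => peval (pdiff 0 e) (fst p) (snd p))).
    + eapply filter_imp; [| now apply (locally_fst (fun s => 0 < s)), locally_pos].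
      intros [s' x'] Hs'. symmetry. now apply dt_peval.
    + apply (peval_regular (pdiff 0 e) (admissible_pdiff 0 e He) s x Hs).
  - intros s x Hs. apply (proj2 (peval_regular e He s x Hs) 0%nat). lia.
Qed.

Lemma pd_upd g i x v : pd i g (upd i x v) = Derive (fun w => g (upd i x w)) v.
Proof. unfold pd. rewrite coord_upd. apply Derive_ext. intros w. now rewrite upd_upd. Qed.

Section Schwarz.
Variables (F : tfield) (i : nat).
Hypothesis HF : smooth_pos F.
Hypothesis Hi : (i < 3)%nat.

Lemma ex_derive_iterD_upd l s x v : 0 < s -> ex_derive (fun z => iterD l F s (upd i x z)) v.
Proof.
  intros Hs. destruct (HF l s (upd i x v) Hs) as [_ [H2 _]].
  specialize (H2 i Hi). rewrite coord_upd in H2.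
  eapply ex_derive_ext; [| exact H2]. intros z. simpl. now rewrite upd_upd.
Qed.

Lemma continuity_2d_iterD_upd l x s v : 0 < s ->
  continuity_2d_pt (fun u w => iterD l F u (upd i x w)) s v.
Proof.
  intros Hs. apply continuity_2d_pt_filterlim.
  change (continuous (fun q : R * R => iterD l F (fst q) (upd i x (snd q))) (s, v)).
  apply (continuous_comp (fun q : R * R => (fst q, upd i x (snd q)))
    (fun p : R * Pt => iterD l F (fst p) (snd p))); [| apply (HF l s (upd i x v) Hs)].
  apply continuous_pair; [continuity_of_projections|].
  apply (continuous_comp (fun q : R * R => (snd q, x)) (fun p : R * Pt => upd i (snd p) (fst p)));
    [continuity_of_projections | apply continuous_upd].
Qed.

Lemma iterD_dt_pd l t x : 0 < t ->
  iterD (0%nat :: S i :: l) F t x = iterD (S i :: 0%nat :: l) F t x.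
Proof.
  intros Ht.
  assert (Hpd : forall z v, Derive (fun w => iterD l F z (upd i x w)) v
                            = iterD (S i :: l) F z (upd i x v))
    by (intros; simpl; now rewrite pd_upd).
  change (Derive (fun z => Derive (fun w => iterD l F z (upd i x w)) (coord i x)) t =
          Derive (fun z => Derive (fun w => iterD l F w (upd i x z)) t) (coord i x)).
  apply Schwarz.
  - exists (mkposreal t Ht). intros u v Hu _. simpl in Hu.
    assert (Hu0 : 0 < u) by (apply Rabs_def2 in Hu; lra).
    repeat split.
    + apply (HF l u _ Hu0).
    + now apply ex_derive_iterD_upd.
    + eapply ex_derive_ext; [| apply (HF (S i :: l) u (upd i x v) Hu0)].
      intros z. simpl. now rewrite Hpd.
    + now apply (ex_derive_iterD_upd (0%nat :: l)).
  - eapply continuity_2d_pt_ext; [| apply (continuity_2d_iterD_upd (0%nat :: S i :: l) x t _ Ht)].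
    intros u v. simpl. unfold dt. apply Derive_ext. intros z. now rewrite Hpd.
  - eapply continuity_2d_pt_ext; [| apply (continuity_2d_iterD_upd (S i :: 0%nat :: l) x t _ Ht)].
    intros u v. simpl. now rewrite pd_upd.
Qed.

End Schwarz.

Lemma iterD_cons_ext d l1 l2 F t x : 0 < t ->
  (forall s y, 0 < s -> iterD l1 F s y = iterD l2 F s y) ->
  iterD (d :: l1) F t x = iterD (d :: l2) F t x.
Proof.
  intros Ht H. destruct d as [|i]; simpl.
  - unfold dt. apply Derive_ext_loc.
    apply (filter_imp (fun s => 0 < s)); [intros s Hs; auto | now apply locally_pos].
  - unfold pd. apply Derive_ext. intros s. now apply H.
Qed.

Lemma iterD_dt_pd_pd F i t x : smooth_pos F -> (i < 3)%nat -> 0 < t ->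
  iterD (0%nat :: S i :: S i :: nil) F t x = iterD (S i :: S i :: 0%nat :: nil) F t x.
Proof.
  intros HF Hi Ht. rewrite iterD_dt_pd by auto.
  apply iterD_cons_ext; auto. intros s y Hs. now apply iterD_dt_pd.
Qed.

Lemma is_derive_Rplus (f g : R -> R) t a b : is_derive f t a -> is_derive g t b ->
  is_derive (fun s => f s + g s) t (a + b).
Proof. intros. now apply (is_derive_plus f g). Qed.

Lemma is_derive_Rscal (f : R -> R) t a c :
  is_derive f t a -> is_derive (fun s => c * f s) t (c * a).
Proof. intros. now apply (is_derive_scal f). Qed.

Lemma is_derive_eq (f : R -> R) (t a b : R) : is_derive f t a -> a = b -> is_derive f t b.
Proof. now intros H <-. Qed.

Lemma is_derive_sqr_sub (f : R -> R) t a c : is_derive f t a ->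
  is_derive (fun s => (f s - c) ^ 2) t (2 * (f t - c) * a).
Proof.
  intros H. apply (is_derive_ext (fun s => (f s - c) * (f s - c))); [intros; simpl; ring|].
  replace (2 * (f t - c) * a) with (a * (f t - c) + (f t - c) * a) by ring.
  assert (Hc : is_derive (fun s => f s - c) t a).
  { replace a with (a + 0) by ring.
    apply (is_derive_Rplus f (fun _ => - c)); [exact H | exact (is_derive_const (- c) t)]. }
  apply (is_derive_mult (fun s => f s - c) (fun s => f s - c)); auto using Rmult_comm.
Qed.

Lemma is_derive_sum3 (f : nat -> R -> R) (df : nat -> R) t :
  (forall i, (i < 3)%nat -> is_derive (f i) t (df i)) ->
  is_derive (fun s => sum3 (fun i => f i s)) t (sum3 df).
Proof. intros H. unfold sum3. repeat apply is_derive_Rplus; apply H; lia. Qed.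

Definition PDt (F : tfield) : pexpr := PDer F (0%nat :: nil).

(* [Pf], [PBdens], [Pg] and [Pmu] reflect f(phi), the integrand of B(phi), g(phi) and dE/dphi;
   in [Pmu] the nonlocal factors M1 (A - alpha) and M2 (B - beta) enter as constants [c1], [c2]. *)
Definition Pphi2m1 (F : tfield) : pexpr := PField F <*> PField F <+> PConst (-1).
Definition P3phi2m1 (F : tfield) : pexpr := PConst 3 <*> (PField F <*> PField F) <+> PConst (-1).

Definition Pf (eps : R) (F : tfield) : pexpr :=
  PConst (- eps) <*> psum3 (fun i => PDer F (S i :: S i :: nil))
  <+> PConst (/ eps) <*> Pphi2m1 F <*> PField F.

Definition PBdens (eps : R) (F : tfield) : pexpr :=
  PConst (eps / 2) <*> psum3 (fun i => PDer F (S i :: nil) <*> PDer F (S i :: nil))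
  <+> PConst (/ (4 * eps)) <*> (Pphi2m1 F <*> Pphi2m1 F).

Definition Pg (eps : R) (F : tfield) : pexpr :=
  PConst (-1) <*> psum3 (fun i => pdiff (S i) (pdiff (S i) (Pf eps F)))
  <+> PConst (/ eps ^ 2) <*> P3phi2m1 F <*> Pf eps F.

Definition Pmu (k eps c1 c2 : R) (F : tfield) : pexpr :=
  PConst k <*> Pg eps F <+> PConst c1 <+> PConst c2 <*> Pf eps F.

Ltac admissible_tac :=
  repeat first [ assumption
               | match goal with
                 | H : forall i, (i < 3)%nat -> regular _ |- regular _ => apply H; lia
                 end
               | apply admissible_pdiff
               | progress cbn [admissible Pf PBdens Pg Pmu Pphi2m1 P3phi2m1 psum3 PField PDt]
               | split | lia ].

Ltac expand_intQ :=
  repeat first [ rewrite intQ_peval_add by admissible_tac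
               | rewrite intQ_peval_scal by admissible_tac
               | rewrite intQ_peval_psum3 by (intros; admissible_tac) ].

Lemma peval_Pf eps F s x : peval (Pf eps F) s x = fphi eps (F s) x.
Proof.
  unfold Pf, Pphi2m1, fphi, lap, sum3, psum3, PField. cbn [peval iterD fold_right Dir]. ring.
Qed.

Lemma Bphi_peval eps F s : Bphi eps (F s) = intQ (peval (PBdens eps F) s).
Proof.
  apply intQ_ext. intros x. unfold PBdens, Pphi2m1, gradsq, sum3, psum3, PField.
  cbn [peval iterD fold_right Dir]. ring.
Qed.

Lemma admissible_Pmu k eps c1 c2 F : regular F -> admissible (Pmu k eps c1 c2 F).
Proof. intros HF. admissible_tac. Qed.

Lemma peval_Pg eps F t x : regular F -> 0 < t -> peval (Pg eps F) t x = gphi eps (F t) x.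
Proof.
  intros HF Ht.
  assert (Hf : fphi eps (F t) = peval (Pf eps F) t)
    by (apply functional_extensionality; intros y; symmetry; apply peval_Pf).
  assert (Hok : admissible (Pf eps F)) by admissible_tac.
  unfold gphi, lap, sum3. rewrite Hf, !(pd_peval (Pf eps F)), !(pd_peval (pdiff _ (Pf eps F)));
    auto using admissible_pdiff.
  unfold Pg, P3phi2m1, psum3, PField. cbn [peval iterD fold_right]. ring.
Qed.

Lemma peval_Pmu k eps M1 M2 alpha beta F t x : regular F -> 0 < t ->
  peval (Pmu k eps (M1 * (Aphi (F t) - alpha)) (M2 * (Bphi eps (F t) - beta)) F) t x
  = dEphi k eps M1 M2 alpha beta (F t) x.
Proof. intros HF Ht. unfold Pmu, dEphi. cbn [peval]. rewrite peval_Pg, peval_Pf by auto. ring. Qed.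

Lemma is_derive_nsq F t : regular F -> 0 < t ->
  is_derive (fun s => nsq (F s)) t (2 * intQ (fun x => F t x * dt F t x)).
Proof.
  intros HF Ht.
  apply (is_derive_ext (fun s => intQ (peval (PField F <*> PField F) s)));
    [intros s; apply intQ_ext; intros x; unfold PField; cbn [peval iterD fold_right]; ring|].
  replace (2 * intQ (fun x => F t x * dt F t x))
    with (intQ (peval (pdiff 0 (PField F <*> PField F)) t));
    [apply is_derive_intQ_peval; admissible_tac|].
  rewrite (intQ_ext _ (peval (PConst 2 <*> (PField F <*> PDt F)) t)) by (intros; cbn; ring).
  rewrite intQ_peval_scal by admissible_tac. reflexivity.
Qed.

Section EnergyDerivative.
Variables (F : tfield) (eps t : R).
Hypothesis HF : regular F.
Hypothesis Heps : 0 < eps.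
Hypothesis Ht : 0 < t.

Lemma is_derive_Aphi : is_derive (fun s => Aphi (F s)) t (intQ (dt F t)).
Proof. exact (is_derive_intQ_peval (PField F) t HF Ht). Qed.

Lemma intQ_fphi_dt :
  intQ (fun x => fphi eps (F t) x * dt F t x)
  = - eps * sum3 (fun i => intQ (peval (PDer F (S i :: S i :: nil) <*> PDt F) t))
    + / eps * intQ (peval (Pphi2m1 F <*> PField F <*> PDt F) t).
Proof.
  rewrite (intQ_ext _ (peval
    (PConst (- eps) <*> psum3 (fun i => PDer F (S i :: S i :: nil) <*> PDt F)
    <+> PConst (/ eps) <*> (Pphi2m1 F <*> PField F <*> PDt F)) t)).
  - expand_intQ. reflexivity.
  - intros x. rewrite <- peval_Pf. unfold Pf, psum3, PField, PDt.
    cbn [peval iterD fold_right Dir]. ring.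
Qed.

Lemma is_derive_Bphi :
  is_derive (fun s => Bphi eps (F s)) t (intQ (fun x => fphi eps (F t) x * dt F t x)).
Proof.
  apply (is_derive_ext (fun s => intQ (peval (PBdens eps F) s))); [intros; now rewrite Bphi_peval|].
  replace (intQ (fun x => fphi eps (F t) x * dt F t x))
    with (intQ (peval (pdiff 0 (PBdens eps F)) t)); [apply is_derive_intQ_peval; admissible_tac|].
  (* d_t d_i phi = d_i d_t phi, then one integration by parts in each direction *)
  rewrite intQ_fphi_dt, (intQ_ext _ (peval
    (PConst eps <*> psum3 (fun i => pdiff (S i) (PField F) <*> pdiff (S i) (PDt F))
     <+> PConst (/ eps) <*> (Pphi2m1 F <*> PField F <*> PDt F)) t)).
  - expand_intQ. unfold sum3. rewrite !intQ_peval_by_parts by (admissible_tac; lia).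
    unfold PField. cbn [pdiff]. ring.
  - intros x. unfold PBdens, Pphi2m1, psum3, PField, PDt. cbn [peval pdiff].
    rewrite !(iterD_dt_pd F) by (destruct HF; auto; lia). field. lra.
Qed.

Lemma gphi_dt_peval :
  (fun x => gphi eps (F t) x * dt F t x) = peval (Pg eps F <*> PDt F) t.
Proof. apply functional_extensionality. intros x. cbn [peval]. now rewrite peval_Pg. Qed.

Lemma fphi_dt_peval :
  (fun x => fphi eps (F t) x * dt F t x) = peval (Pf eps F <*> PDt F) t.
Proof. apply functional_extensionality. intros x. cbn [peval]. now rewrite peval_Pf. Qed.

Lemma intQ_gphi_dt :
  intQ (fun x => gphi eps (F t) x * dt F t x)
  = - sum3 (fun i => intQ (peval (pdiff (S i) (pdiff (S i) (Pf eps F)) <*> PDt F) t))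
    + / eps ^ 2 * intQ (peval (P3phi2m1 F <*> Pf eps F <*> PDt F) t).
Proof.
  rewrite gphi_dt_peval, (intQ_ext _ (peval
    (PConst (-1) <*> psum3 (fun i => pdiff (S i) (pdiff (S i) (Pf eps F)) <*> PDt F)
     <+> PConst (/ eps ^ 2) <*> (P3phi2m1 F <*> Pf eps F <*> PDt F)) t)).
  - expand_intQ. ring.
  - intros x. unfold Pg, psum3. cbn [peval]. ring.
Qed.

Lemma is_derive_intQ_fphi_sq :
  is_derive (fun s => intQ (fun x => (fphi eps (F s) x) ^ 2)) t
    (2 * eps * intQ (fun x => gphi eps (F t) x * dt F t x)).
Proof.
  apply (is_derive_ext (fun s => intQ (peval (Pf eps F <*> Pf eps F) s))).
  { intros s. apply intQ_ext. intros x. cbn [peval]. rewrite peval_Pf. ring. }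
  replace (2 * eps * intQ (fun x => gphi eps (F t) x * dt F t x))
    with (intQ (peval (pdiff 0 (Pf eps F <*> Pf eps F)) t));
    [apply is_derive_intQ_peval; admissible_tac|].
  (* d_t (Lap phi) = Lap (d_t phi), and Lap moves onto f(phi) by integrating by parts twice *)
  rewrite intQ_gphi_dt, (intQ_ext _ (peval (PConst 2 <*>
    (PConst (- eps) <*> psum3 (fun i => Pf eps F <*> pdiff (S i) (pdiff (S i) (PDt F)))
     <+> PConst (/ eps) <*> (P3phi2m1 F <*> Pf eps F <*> PDt F))) t)).
  - expand_intQ. unfold sum3. rewrite !intQ_peval_by_parts2 by (admissible_tac; lia). field. lra.
  - intros x. unfold Pf, Pphi2m1, P3phi2m1, psum3, PField, PDt. cbn [peval pdiff].
    rewrite !(iterD_dt_pd_pd F) by (destruct HF; auto; lia). ring.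
Qed.

Lemma is_derive_Ephi k M1 M2 alpha beta :
  is_derive (fun s => Ephi k eps M1 M2 alpha beta (F s)) t
    (intQ (fun x => dEphi k eps M1 M2 alpha beta (F t) x * dt F t x)).
Proof.
  set (c1 := M1 * (Aphi (F t) - alpha)). set (c2 := M2 * (Bphi eps (F t) - beta)).
  assert (Hsplit : intQ (fun x => dEphi k eps M1 M2 alpha beta (F t) x * dt F t x)
    = k * intQ (fun x => gphi eps (F t) x * dt F t x) + c1 * intQ (dt F t)
      + c2 * intQ (fun x => fphi eps (F t) x * dt F t x)).
  { rewrite gphi_dt_peval, fphi_dt_peval, (intQ_ext _ (peval
      (PConst k <*> (Pg eps F <*> PDt F) <+> PConst c1 <*> PDt F
       <+> PConst c2 <*> (Pf eps F <*> PDt F)) t)).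
    - expand_intQ. reflexivity.
    - intros x. unfold c1, c2, PDt. cbn [peval iterD fold_right Dir].
      rewrite <- (peval_Pmu k eps M1 M2 alpha beta F t x HF Ht). unfold Pmu. cbn [peval]. ring. }
  assert (D := is_derive_Rplus _ _ _ _ _
    (is_derive_Rplus _ _ _ _ _ (is_derive_Rscal _ _ _ (k / (2 * eps)) is_derive_intQ_fphi_sq)
      (is_derive_Rscal _ _ _ (/ 2 * M1) (is_derive_sqr_sub _ _ _ alpha is_derive_Aphi)))
    (is_derive_Rscal _ _ _ (/ 2 * M2) (is_derive_sqr_sub _ _ _ beta is_derive_Bphi))).
  apply (is_derive_eq _ _ _ _ D). rewrite Hsplit. unfold c1, c2, Aphi. field. lra.
Qed.

End EnergyDerivative.

Section Dissipation.
Variables (u : nat -> tfield) (P phi : tfield) (W : pexpr) (mu gamma t : R).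
Hypothesis Hu : forall i, (i < 3)%nat -> regular (u i).
Hypothesis HP : regular P.
Hypothesis Hphi : regular phi.
Hypothesis HW : admissible W.
Hypothesis Ht : 0 < t.
Hypothesis Hdiv : forall x, sum3 (fun j => pd j (u j t) x) = 0.

Local Notation U i := (PField (u i)).

Lemma convection_by_parts i j : (i < 3)%nat -> (j < 3)%nat ->
  intQ (peval (U i <*> U j <*> pdiff (S j) (U i)) t)
  = - / 2 * intQ (peval (U i <*> U i <*> pdiff (S j) (U j)) t).
Proof.
  (* the integration by parts reproduces the left-hand side *)
  intros Hi Hj. assert (E := intQ_peval_by_parts (U i <*> U j) (U i) t j).
  rewrite (intQ_ext (peval (pdiff (S j) (U i <*> U j) <*> U i) t)
    (peval (U i <*> U j <*> pdiff (S j) (U i) <+> U i <*> U i <*> pdiff (S j) (U j)) t))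
    in E by (intros; cbn [peval pdiff]; ring).
  rewrite intQ_peval_add in E by admissible_tac.
  specialize (E ltac:(admissible_tac) ltac:(admissible_tac) Ht Hj). lra.
Qed.

Lemma intQ_u_sq_div i : (i < 3)%nat ->
  sum3 (fun j => intQ (peval (U i <*> U i <*> pdiff (S j) (U j)) t)) = 0.
Proof.
  intros Hi. rewrite <- intQ_peval_psum3 by (intros; admissible_tac).
  rewrite <- intQ_zero. apply intQ_ext. intros x.
  unfold psum3, PField. cbn [peval pdiff iterD fold_right Dir].
  transitivity (u i t x * u i t x * sum3 (fun j => pd j (u j t) x)); [unfold sum3; ring|].
  rewrite Hdiv. ring.
Qed.

Lemma convection_free :
  sum3 (fun i => sum3 (fun j => intQ (peval (U i <*> U j <*> pdiff (S j) (U i)) t))) = 0.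
Proof.
  rewrite (sum3_ext _
    (fun i => - / 2 * sum3 (fun j => intQ (peval (U i <*> U i <*> pdiff (S j) (U j)) t)))).
  - unfold sum3 at 1. rewrite !intQ_u_sq_div by lia. ring.
  - intros i Hi. rewrite (sum3_ext _ _ (fun j => convection_by_parts i j Hi)). unfold sum3. ring.
Qed.

Lemma pressure_free : sum3 (fun i => intQ (peval (U i <*> pdiff (S i) (PField P)) t)) = 0.
Proof.
  rewrite (sum3_ext _ (fun i => - intQ (peval (pdiff (S i) (U i) <*> PField P) t)))
    by (intros; apply intQ_peval_by_parts; admissible_tac).
  transitivity (- intQ (peval (psum3 (fun i => pdiff (S i) (U i) <*> PField P)) t));
    [rewrite intQ_peval_psum3 by (intros; admissible_tac); unfold sum3; ring|].
  rewrite <- Ropp_0, <- intQ_zero. f_equal. apply intQ_ext. intros x.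
  unfold psum3, PField. cbn [peval pdiff iterD fold_right Dir].
  transitivity (sum3 (fun j => pd j (u j t) x) * P t x); [unfold sum3; ring|].
  rewrite Hdiv. ring.
Qed.

Lemma viscous_dissipation i j : (i < 3)%nat -> (j < 3)%nat ->
  intQ (peval (U i <*> pdiff (S j) (pdiff (S j) (U i))) t) = - nsq (pd j (u i t)).
Proof.
  intros Hi Hj. rewrite intQ_peval_by_parts by admissible_tac.
  f_equal. apply intQ_ext. intros x. cbn [peval pdiff PField iterD fold_right Dir]. ring.
Qed.

Hypothesis Hmomentum : forall i x, (i < 3)%nat ->
  dt (u i) t x + sum3 (fun j => u j t x * pd j (u i t) x) + pd i (P t) x
  = mu * lap (u i t) x + peval W t x * pd i (phi t) x.
Hypothesis Hphase : forall x,
  dt phi t x + sum3 (fun j => u j t x * pd j (phi t) x) = - gamma * peval W t x.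

Lemma energy_balance :
  sum3 (fun i => intQ (fun x => u i t x * dt (u i) t x)) + intQ (fun x => peval W t x * dt phi t x)
  = - (mu * sum3 (fun i => sum3 (fun j => nsq (pd j (u i t)))) + gamma * nsq (peval W t)).
Proof.
  set (conv := psum3 (fun i => psum3 (fun j => U i <*> U j <*> pdiff (S j) (U i)))).
  set (pres := psum3 (fun i => U i <*> pdiff (S i) (PField P))).
  set (visc := psum3 (fun i => psum3 (fun j => U i <*> pdiff (S j) (pdiff (S j) (U i))))).
  transitivity (intQ (peval (psum3 (fun i => U i <*> PDt (u i)) <+> W <*> PDt phi) t));
    [rewrite intQ_peval_add, intQ_peval_psum3 by (intros; admissible_tac); reflexivity|].
  rewrite (intQ_ext _ (peval (PConst (-1) <*> conv <+> PConst (-1) <*> pres <+> PConst mu <*> visc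
                              <+> PConst (- gamma) <*> (W <*> W)) t)).
  - rewrite !intQ_peval_add, !intQ_peval_scal by admissible_tac.
    unfold conv, visc.
    rewrite (intQ_peval_psum3_psum3 (fun i j => U i <*> U j <*> pdiff (S j) (U i))),
      (intQ_peval_psum3_psum3 (fun i j => U i <*> pdiff (S j) (pdiff (S j) (U i))))
      by (intros; admissible_tac).
    unfold pres. rewrite intQ_peval_psum3 by (intros; admissible_tac).
    rewrite convection_free, pressure_free.
    rewrite (sum3_ext _ _ (fun i Hi => sum3_ext _ _ (fun j Hj => viscous_dissipation i j Hi Hj))).
    unfold nsq.
    rewrite (intQ_ext (fun x => peval W t x ^ 2) (peval (W <*> W) t)) by (intros; cbn; ring).
    unfold sum3. ring.
  - (* the capillary force W grad phi . u cancels the transport term of the phase equation *)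
    intros x. unfold conv, pres, visc, psum3, PField, PDt. cbn [peval pdiff iterD fold_right Dir].
    assert (Hdt : forall i, (i < 3)%nat -> dt (u i) t x
      = mu * lap (u i t) x + peval W t x * pd i (phi t) x
        - sum3 (fun j => u j t x * pd j (u i t) x) - pd i (P t) x)
      by (intros i Hi; specialize (Hmomentum i x Hi); lra).
    assert (Hdphi : dt phi t x = - gamma * peval W t x - sum3 (fun j => u j t x * pd j (phi t) x))
      by (specialize (Hphase x); lra).
    rewrite !Hdt, Hdphi by lia. unfold lap, sum3. ring.
Qed.

End Dissipation.

Theorem lemma2p3 (k eps gamma mu M1 M2 : R)
  (u : nat -> tfield) (P phi : tfield) :
  0 < k -> 0 < eps -> 0 < gamma -> 0 < mu -> 0 < M1 -> 0 < M2 ->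
  (forall i, (i < 3)%nat -> smooth_pos (u i)) -> smooth_pos P -> smooth_pos phi ->
  (forall i t, (i < 3)%nat -> 0 <= t -> periodic (u i t)) ->
  (forall t, 0 <= t -> periodic (P t)) ->
  (forall t, 0 <= t -> periodic (phi t)) ->
  (forall x, sum3 (fun j => pd j (u j 0) x) = 0) ->
  (forall i, (i < 3)%nat -> intQ (u i 0) = 0) ->
  let alpha := Aphi (phi 0) in
  let beta := Bphi eps (phi 0) in
  let dE := fun t => dEphi k eps M1 M2 alpha beta (phi t) in
  (forall i t x, (i < 3)%nat -> 0 < t ->
     dt (u i) t x + sum3 (fun j => u j t x * pd j (u i t) x) + pd i (P t) x
     = mu * lap (u i t) x + dE t x * pd i (phi t) x) ->
  (forall t x, 0 < t -> sum3 (fun j => pd j (u j t) x) = 0) ->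
  (forall t x, 0 < t ->
     dt phi t x + sum3 (fun j => u j t x * pd j (phi t) x) = - gamma * dE t x) ->
  forall t, 0 < t ->
    is_derive
      (fun s => / 2 * sum3 (fun i => nsq (u i s)) + Ephi k eps M1 M2 alpha beta (phi s))
      t
      (- (mu * sum3 (fun i => sum3 (fun j => nsq (pd j (u i t)))) + gamma * nsq (dE t))).
Proof.
  intros _ Heps _ _ _ _ Hsu HsP Hsphi Hpu HpP Hpphi _ _ alpha beta dE Hmom Hdiv Hphase t Ht.
  assert (Hu : forall i, (i < 3)%nat -> regular (u i))
    by (intros i Hi; split; [auto | intros s Hs; apply Hpu; auto; lra]).
  assert (HP : regular P) by (split; [auto | intros s Hs; apply HpP; lra]).
  assert (Hphi : regular phi) by (split; [auto | intros s Hs; apply Hpphi; lra]).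
  set (W := Pmu k eps (M1 * (Aphi (phi t) - alpha)) (M2 * (Bphi eps (phi t) - beta)) phi).
  assert (HW : peval W t = dE t)
    by (apply functional_extensionality; intros x; now apply peval_Pmu).
  assert (Hbalance := energy_balance u P phi W mu gamma t Hu HP Hphi
    (admissible_Pmu _ _ _ _ _ Hphi) Ht (fun x => Hdiv t x Ht)).
  rewrite HW in Hbalance.
  specialize (Hbalance (fun i x Hi => Hmom i t x Hi Ht) (fun x => Hphase t x Ht)).
  assert (D := is_derive_Rplus _ _ _ _ _
    (is_derive_Rscal _ _ _ (/ 2) (is_derive_sum3 (fun i s => nsq (u i s)) _ t
      (fun i Hi => is_derive_nsq (u i) t (Hu i Hi) Ht)))
    (is_derive_Ephi phi eps t Hphi Heps Ht k M1 M2 alpha beta)).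
  apply (is_derive_eq _ _ _ _ D). rewrite <- Hbalance. unfold sum3, dE. field.
Qed.
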